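(* Let $f:X\to X$ be a piecewise contracting map on a compact, locally connected metric space $(X,d)$, and let $L$, $\Omega$ and $\Lambda$ denote its limit set, non-wandering set and attractor. Then (i) $L\subset\Omega\subset\Lambda$; (ii) every non-wandering point lying in the interior (in $X$) of $\tilde X$ is recurrent, i.e. if $x\in\operatorname{int}(\tilde X)\cap\Omega$ then $x\in\omega(x)$.
   Context: A map $f:X\to X$ on a compact, locally connected metric space $(X,d)$ is piecewise contracting if there are $N\ge2$ non-empty, pairwise disjoint open sets $X_1,\dots,X_N$ with $X=\bigcup_i\overline{X_i}$, a constant $\lambda\in(0,1)$ with $d(f(x),f(y))\le\lambda d(x,y)$ for all $x,y$ in the same $X_i$, and such that $\tilde X:=\bigcap_{n\ge0}f^{-n}(X\setminus\Delta)\neq\emptyset$, where $\Delta:=X\setminus\bigcup_iX_i$ ($f$ is arbitrary on $\Delta$). For $x\in\tilde X$, $\omega(x)$ is the set of $y\in X$ such that $f^{n_k}(x)\to y$ for some divergent sequence $(n_k)$; the limit set is $L:=\overline{\bigcup_{x\in\tilde X}\omega(x)}$. A point $x\in\tilde X$ is recurrent if $x\in\omega(x)$. A point $x\in X$ is non-wandering if for every $\epsilon>0$ there is a divergent sequence $(n_k)$ with $f^{n_k}(B(x,\epsilon)\cap\tilde X)\cap B(x,\epsilon)\neq\emptyset$ for all $k$; $\Omega$ is the set of non-wandering points. For $A\subset X$ let $F_i(A):=\overline{f(A\cap X_i)}$; an atom of generation $n\ge1$ is a set of the form $F_{i_n}\circ\cdots\circ F_{i_1}(X)$ with $i_1,\dots,i_n\in\{1,\dots,N\}$;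 $\mathcal A_n$ is the set of atoms of generation $n$, $\Lambda_n:=\bigcup_{A\in\mathcal A_n}A$, and the attractor is $\Lambda:=\bigcap_{n\ge1}\Lambda_n$. *)

From HB Require Import structures.
From mathcomp Require Import all_boot all_order all_algebra.
From mathcomp Require Import all_classical all_reals all_analysis.
Set Implicit Arguments. Unset Strict Implicit. Unset Printing Implicit Defensive.
Import Order.TTheory GRing.Theory Num.Theory.
Local Open Scope classical_set_scope.
Local Open Scope ring_scope.

Section PC.
Context {R : realType} {X : metricType R}.

Definition locally_connected_space : Prop :=
  forall (x : X) (U : set X), nbhs x U ->
    exists V : set X, [/\ open V, V x, connected V & V `<=` U].

Definition divergent (n : nat -> nat) : Prop :=
  forall M : nat, exists K : nat, forall k, (K <= k)%N -> (M <= n k)%N.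

Variables (f : X -> X) (N : nat) (Xi : 'I_N -> set X).

Definition Delta : set X := ~` (\bigcup_(i in setT) Xi i).

(* tilde X = bigcap_{n>=0} f^{-n}(X \ Delta) *)
Definition tildeX : set X := [set x | forall n : nat, ~ Delta (iter n f x)].

Definition piecewise_contracting (lam : R) : Prop :=
  [/\ (2 <= N)%N,
      (forall i, Xi i !=set0),
      (forall i, open (Xi i)),
      (forall i j, i != j -> Xi i `&` Xi j = set0)
    & [/\ setT = \bigcup_(i in setT) closure (Xi i),
      0 < lam < 1,
      (forall i (x y : X), Xi i x -> Xi i y ->
          mdist (f x) (f y) <= lam * mdist x y)
    & tildeX !=set0]].

Definition omega (x : X) : set X :=
  [set y | exists n : nat -> nat, divergent n /\
     (fun k => iter (n k) f x) @ \oo --> y].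

Definition limit_set : set X :=
  closure (\bigcup_(x in tildeX) omega x).

Definition recurrent (x : X) : Prop := tildeX x /\ omega x x.

Definition nonwandering : set X :=
  [set x | forall eps : R, 0 < eps ->
     exists n : nat -> nat, divergent n /\
       forall k, (iter (n k) f @` (ball x eps `&` tildeX)) `&` ball x eps !=set0].

Definition Fi (i : 'I_N) (A : set X) : set X := closure (f @` (A `&` Xi i)).

(* the atom F_{i_n} o ... o F_{i_1}(X) for s = [:: i_1; ...; i_n] *)
Definition atom (s : seq 'I_N) : set X := foldl (fun A i => Fi i A) setT s.

Definition Lambda_n (n : nat) : set X :=
  \bigcup_(s in [set s : seq 'I_N | size s = n]) atom s.

Definition attractor : set X := \bigcap_(n in [set n : nat | (1 <= n)%N]) Lambda_n n.

End PC.

From HB Require Import structures.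
From mathcomp Require Import all_boot all_order all_algebra.
From mathcomp Require Import all_classical all_reals all_analysis.
From mathcomp Require Import zify.
Import Order.TTheory GRing.Theory Num.Theory.
Local Open Scope classical_set_scope.
Local Open Scope ring_scope.

(** (i) A point of an omega-limit set is revisited by the orbit of a
    single point of [tildeX], so it is non-wandering; the non-wandering set
    is closed, hence contains [L]. The orbit of a point of [tildeX] of length
    [n] lies in an atom of generation [n], and atoms are closed, so every
    non-wandering point is a limit of points of [Lambda_n], i.e. lies in
    each [Lambda_n].
    (ii) A connected set contained in [tildeX] stays, at every step, inside
    a single (open, pairwise disjoint) piece [X_i]; hence all its iterates
    are connected and [f^n] does not increase distances on it. If [x] has a
    connected neighbourhood [V] inside [tildeX] and some [z] near [x] comes
    back near [x] at time [n], then [f^n x] is within [d(x, z)] of [f^n z],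
    so the orbit of [x] itself comes back near [x] arbitrarily late. *)

Section PiecewiseMap.
Context {R : realType} {X : metricType R} (f : X -> X) (N : nat)
  (Xi : 'I_N -> set X).

Lemma tildeX_iter {x} m : tildeX f Xi x -> tildeX f Xi (iter m f x).
Proof. by move=> hx n; rewrite -iterD; exact: hx. Qed.

Lemma notDelta_piece {y} : ~ Delta Xi y -> exists i, Xi i y.
Proof.
move=> hy; apply: contrapT => hnone.
by apply: hy => -[i _ Xiy]; apply: hnone; exists i.
Qed.

Lemma omega_sub_nonwandering x :
  tildeX f Xi x -> omega f x `<=` nonwandering f Xi.
Proof.
move=> tx y [n [dn cv]] eps eps0.
have [K0 _ HK0] := cvg_ball cv eps0.
have [K1 HK1] := dn (n K0).
pose m := n K0; pose K := maxn K0 K1.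
exists (fun k => (n (k + K) - m)%N); split.
  move=> M; have [K2 HK2] := dn (M + m)%N; exists K2 => k hk.
  by have := HK2 (k + K)%N ltac:(lia); lia.
move=> k; have hm : (m <= n (k + K))%N by apply: HK1; lia.
exists (iter (n (k + K)) f x); split; last by apply: HK0 => /=; lia.
exists (iter m f x); last by rewrite -iterD subnK.
split; [by apply: HK0 => /= | exact: tildeX_iter].
Qed.

Lemma closed_nonwandering : closed (nonwandering f Xi).
Proof.
move=> y cy eps eps0.
have e20 : 0 < eps / 2 by rewrite divr_gt0.
have [x [nwx yx]] := cy _ (nbhsx_ballx y (eps / 2) e20).
have [n [dn Hn]] := nwx _ e20.
exists n; split => // k.
have [_ [[z [xz tz] <-] xw]] := Hn k.
exists (iter (n k) f z); split.
  by exists z; split => //; rewrite (splitr eps); exact: ball_triangle yx xz.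
by rewrite (splitr eps); exact: ball_triangle yx xw.
Qed.

Lemma limit_set_sub_nonwandering : limit_set f Xi `<=` nonwandering f Xi.
Proof.
move=> y cy; apply: closed_nonwandering; apply: closureS cy => z [x tx oz].
exact: omega_sub_nonwandering tx _ oz.
Qed.

Lemma iter_in_atom n {z} : tildeX f Xi z ->
  exists2 s : seq 'I_N, size s = n & atom f Xi s (iter n f z).
Proof.
move=> tz; elim: n => [|n [s hs hA]]; first by exists [::].
have [i hi] := notDelta_piece (tz n).
exists (rcons s i); first by rewrite size_rcons hs.
rewrite /atom foldl_rcons -/(atom f Xi s) /Fi.
by apply: subset_closure; exists (iter n f z).
Qed.

Lemma finite_seq_of_size n : finite_set [set s : seq 'I_N | size s = n].
Proof.
have -> : [set s : seq 'I_N | size s = n] = (@tval n 'I_N) @` setT.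
  apply/seteqP; split => s /=; last by move=> [t _ <-]; exact: size_tuple.
  by move=> /eqP hs; exists (Tuple hs).
exact/finite_image/finite_finset.
Qed.

Lemma closed_Lambda_n n : (1 <= n)%N -> closed (Lambda_n f Xi n).
Proof.
move=> n1; apply: closed_bigcup; first exact: finite_seq_of_size.
move=> s /= hs; case/lastP: s hs => [|s i] hs; first by rewrite -hs in n1.
by rewrite /atom foldl_rcons; exact: closed_closure.
Qed.

Lemma nonwandering_sub_attractor : nonwandering f Xi `<=` attractor f Xi.
Proof.
move=> x nwx n /= n1; apply: (closed_Lambda_n _ n1).
move=> B /nbhs_ballP [eps eps0 epsB].
have [p [dp Hp]] := nwx _ eps0.
have [K HK] := dp n.
have [_ [[z [xz tz] <-] xw]] := Hp K.
exists (iter (p K) f z); split; last exact: epsB.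
have [s hs hA] := iter_in_atom n (tildeX_iter (p K - n)%N tz).
by exists s => //; rewrite -iterD subnKC ?HK in hA.
Qed.

Section ConnectedSets.
Variable lam : R.
Hypothesis lam_le1 : lam <= 1.
Hypothesis open_piece : forall i, open (Xi i).
Hypothesis disjoint_pieces : forall i j, i != j -> Xi i `&` Xi j = set0.
Hypothesis contract_piece : forall i (x y : X), Xi i x -> Xi i y ->
  mdist (f x) (f y) <= lam * mdist x y.

(* The other pieces form an open set whose complement, inside [tildeX],
   is exactly [Xi i]: so [Xi i] is clopen relative to [C]. *)
Lemma connected_sub_piece {C : set X} {a i} :
  connected C -> C `<=` tildeX f Xi -> C a -> Xi i a -> C `<=` Xi i.
Proof.
move=> cC sC Ca Xia.
have CXi : C `&` Xi i = C.
  apply: cC; first by exists a.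
    by exists (Xi i).
  exists (~` \bigcup_(j in [set j | j != i]) Xi j).
    by rewrite closedC; apply: bigcup_open => j _; exact: open_piece.
  apply/seteqP; split => y [Cy Hy]; split => //.
    move=> [j /= ji Xjy].
    by have : (Xi j `&` Xi i) y by []; rewrite disjoint_pieces.
  have [j Xjy] := notDelta_piece (sC _ Cy 0%N).
  by case: (eqVneq j i) => [<- //|ji]; exfalso; apply: Hy; exists j.
by move=> y; rewrite -CXi => -[].
Qed.

Lemma nonexpansive_on_connected {C : set X} :
  connected C -> C `<=` tildeX f Xi ->
  forall u v, C u -> C v -> mdist (f u) (f v) <= mdist u v.
Proof.
move=> cC sC u v Cu Cv.
have [i Xiu] := notDelta_piece (sC _ Cu 0%N).
have sCi := connected_sub_piece cC sC Cu Xiu.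
apply: le_trans (contract_piece _ _ _ (sCi _ Cu) (sCi _ Cv)) _.
exact: ler_piMl (mdist_ge0 _ _) lam_le1.
Qed.

Lemma nonexpansive_continuous {A : set X} :
  (forall x y, A x -> A y -> mdist (f x) (f y) <= mdist x y) ->
  {within A, continuous f}.
Proof.
move=> hA; apply/subspace_continuousP => x Ax.
apply/cvg_ballP => e e0; apply/nbhs_ballP; exists e => // y xy Ay.
rewrite ballEmdist /=; apply: le_lt_trans (hA _ _ Ax Ay) _.
by rewrite ballEmdist in xy.
Qed.

Lemma connected_iter_image {C : set X} :
  connected C -> C `<=` tildeX f Xi -> forall m, connected (iter m f @` C).
Proof.
move=> cC sC; elim=> [|m cD].
  by rewrite (_ : _ @` _ = C) // image_id.
have sD : iter m f @` C `<=` tildeX f Xi.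
  by move=> _ [y Cy <-]; exact/tildeX_iter/sC.
rewrite (_ : _ @` _ = f @` (iter m f @` C)); last by rewrite -image_comp.
exact: connected_continuous_connected cD
  (nonexpansive_continuous (nonexpansive_on_connected cD sD)).
Qed.

Lemma iter_nonexpansive_on_connected {C : set X} m :
  connected C -> C `<=` tildeX f Xi -> forall y z, C y -> C z ->
  mdist (iter m f y) (iter m f z) <= mdist y z.
Proof.
move=> cC sC y z Cy Cz; elim: m => [|m IH] /=; first by rewrite lexx.
have sD : iter m f @` C `<=` tildeX f Xi.
  by move=> _ [w Cw <-]; exact/tildeX_iter/sC.
apply: le_trans IH.
apply: (nonexpansive_on_connected (connected_iter_image cC sC m) sD);
  by [exists y | exists z].
Qed.

Lemma interior_nonwandering_returns x :
  locally_connected_space (X := X) ->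
  (tildeX f Xi)° x -> nonwandering f Xi x ->
  forall d, 0 < d -> forall M, exists2 m, (M <= m)%N & ball x d (iter m f x).
Proof.
move=> lc ix nwx d d0 M.
have [V [oV Vx cV sV]] := lc x _ ix.
have /nbhs_ballP [r r0 rV] : nbhs x V by exact: open_nbhs_nbhs.
pose e := Num.min r (d / 2).
have e0 : 0 < e by rewrite lt_min r0 divr_gt0.
have [n [dn Hn]] := nwx _ e0.
have [K HK] := dn M.
have [_ [[z [xz tz] <-] xw]] := Hn K.
exists (n K); first exact: HK.
have Vz : V z by apply: rV; apply: le_ball xz; rewrite ge_min lexx.
have zx : ball (iter (n K) f z) e (iter (n K) f x).
  rewrite ballEmdist /=.
  apply: le_lt_trans (iter_nonexpansive_on_connected _ cV sV _ _ Vz Vx) _.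
  by move: xz; rewrite ballEmdist /= metric_sym.
apply: le_ball (ball_triangle xw zx).
by rewrite [leRHS](splitr d) lerD // ge_min lexx orbT.
Qed.

End ConnectedSets.

End PiecewiseMap.

Lemma omega_of_returns {R : realType} {X : metricType R} (f : X -> X) x :
  (forall d : R, 0 < d -> forall M, exists2 m, (M <= m)%N & ball x d (iter m f x)) ->
  omega f x x.
Proof.
move=> ret.
have /choice [g hg] : forall k : nat,
    exists m, (k <= m)%N /\ ball x (k.+1%:R^-1) (iter m f x).
  move=> k; have [|m km xm] := ret (k.+1%:R^-1) _ k; last by exists m.
  by rewrite invr_gt0.
exists g; split; first by move=> M; exists M => k Mk; exact: leq_trans Mk (hg k).1.
apply/cvg_ballP => e e0; near=> k; apply: le_ball (hg k).2; apply: ltW.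
by near: k; exact: (near_infty_natSinv_lt (PosNum e0)).
Unshelve. all: by end_near.
Qed.

Theorem theorem2 (R : realType) (X : metricType R) (f : X -> X) (N : nat)
  (Xi : 'I_N -> set X) (lam : R) :
  compact [set: X] ->
  locally_connected_space (X := X) ->
  piecewise_contracting f Xi lam ->
  (limit_set f Xi `<=` nonwandering f Xi /\ nonwandering f Xi `<=` attractor f Xi) /\
  (forall x : X, (tildeX f Xi)° x -> nonwandering f Xi x -> omega f x x).
Proof.
move=> _ lc [_ _ open_piece disjoint_pieces [_ /andP[_ lam_lt1] contract _]].
split; first split.
- exact: limit_set_sub_nonwandering.
- exact: nonwandering_sub_attractor.
- move=> x ix nwx; apply: omega_of_returns.
  exact: (interior_nonwandering_returns _ _ _ _ (ltW lam_lt1) open_piece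
    disjoint_pieces contract _ lc ix nwx).
Qed.
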